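(* Let $k\ge2$. There is a first-order formula $\gamma(x,y,z,t)$ in the group language such that for every $b_1\in Ab$ and all $n,l,m\in\mathbb{Z}$: $BS(1,k)\models\gamma(b_1^n,b_1^l,b_1^m,b_1)$ if and only if $n\cdot l=m$. (That is, multiplication of integers is definable on $\langle b_1\rangle$, identified with $\mathbb{Z}$ via $b_1^m\mapsto m$, with parameter $b_1$.)
   Context: $BS(1,k)=\langle a,b\mid b^{-1}ab=a^k\rangle$, identified with $\mathbb{Z}[1/k]\rtimes\mathbb{Z}$ (pairs $(y,m)$, $y\in\mathbb{Z}[1/k]=\{zk^i:z,i\in\mathbb{Z}\}$, product $(y_1,m_1)(y_2,m_2)=(y_1+y_2k^{-m_1},m_1+m_2)$), with $a=(1,0)$, $b=(0,1)$; $a^y=(y,0)$. $Ab=\{a^yb:y\in\mathbb{Z}[1/k]\}$. *)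

(* BS(1,k) modelled as Z[1/k] x| Z inside rat * int. *)
From mathcomp Require Import all_boot all_algebra.
Set Implicit Arguments. Unset Strict Implicit. Unset Printing Implicit Defensive.
Import GRing.Theory Num.Theory.
Local Open Scope ring_scope.

Definition inZk (k : nat) (y : rat) : Prop :=
  exists (z i : int), y = z%:~R * (k%:R : rat) ^ i.

Definition bs_mem (k : nat) (g : rat * int) : Prop := inZk k g.1.

Definition bs_mul (k : nat) (g h : rat * int) : rat * int :=
  (g.1 + h.1 * (k%:R : rat) ^ (- g.2), g.2 + h.2).
Definition bs_one : rat * int := (0, 0).
Definition bs_inv (k : nat) (g : rat * int) : rat * int :=
  (- (g.1 * (k%:R : rat) ^ g.2), - g.2).
Definition bs_a : rat * int := (1, 0).
Definition bs_b : rat * int := (0, 1).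
Definition bs_apow (y : rat) : rat * int := (y, 0).

Definition bs_pow (k : nat) (g : rat * int) (n : int) : rat * int :=
  match n with
  | Posz n => iter n (bs_mul k g) bs_one
  | Negz n => iter n.+1 (bs_mul k (bs_inv k g)) bs_one
  end.

Inductive gterm : Type :=
  | tvar of nat
  | tone
  | tmul of gterm & gterm
  | tinv of gterm.

Inductive gform : Type :=
  | feq of gterm & gterm
  | fnot of gform
  | fand of gform & gform
  | forr of gform & gform
  | fimp of gform & gform
  | fex of nat & gform
  | fall of nat & gform.

Definition env := nat -> rat * int.

Definition upd (e : env) (i : nat) (g : rat * int) : env :=
  fun j => if j == i then g else e j.

Fixpoint teval (k : nat) (e : env) (t : gterm) : rat * int :=
  match t with
  | tvar i => e i
  | tone => bs_one
  | tmul s u => bs_mul k (teval k e s) (teval k e u)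
  | tinv s => bs_inv k (teval k e s)
  end.

Fixpoint sat (k : nat) (e : env) (f : gform) : Prop :=
  match f with
  | feq s t => teval k e s = teval k e t
  | fnot f => ~ sat k e f
  | fand f g => sat k e f /\ sat k e g
  | forr f g => sat k e f \/ sat k e g
  | fimp f g => sat k e f -> sat k e g
  | fex i f => exists g, bs_mem k g /\ sat k (upd e i g) f
  | fall i f => forall g, bs_mem k g -> sat k (upd e i g) f
  end.

From Corelib Require Import Morphisms_Prop.
From mathcomp Require Import all_boot all_order all_algebra.
From mathcomp Require Import ring lra zify.
Import Order.TTheory GRing.Theory Num.Theory.
Set Implicit Arguments. Unset Strict Implicit. Unset Printing Implicit Defensive.
Local Open Scope ring_scope.

(* Let t = b1. Its centraliser is the cyclic group <t>, and the kernel A ~ Z[1/k]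
   of BS(1,k) -> Z is definable from t (see [fker]). Conjugation by t^n acts
   on A as multiplication by k^n, so u |-> u^(t^n) u^-1 maps A onto
   (k^n - 1)A, and (k^m - 1)A is contained in (k^n - 1)A iff n divides m.
   Hence divisibility of exponents on <t> is definable, so is "c = +-lcm(a, b)",
   and through lcm(x, x + 1) = +-x(x + 1) so is x |-> x(x + 1); finally
   nl is recovered from (n + l)(n + l + 1) - (n - l)(n - l + 1) = 4nl + 2l. *)

Lemma coprime_pred_expn (k N : nat) : (0 < k)%N -> (0 < N)%N -> coprime (k ^ N).-1 k.
Proof.
move=> k_gt0 N_gt0; apply: coprime_dvdr (dvdn_exp N_gt0 (dvdnn k)) _.
by rewrite -{2}(@prednK (k ^ N)) ?expn_gt0 ?k_gt0 // coprimenS.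
Qed.

Lemma dvdn_pred_expn (k r N : nat) : (1 < k)%N -> (r < N)%N ->
  ((k ^ N).-1 %| (k ^ r).-1)%N -> r = 0%N.
Proof.
move=> k_gt1 lt_rN dvd_kr.
have lt_kr : ((k ^ r).-1 < (k ^ N).-1)%N.
  by rewrite -ltnS !prednK ?expn_gt0 ?(ltnW k_gt1) // ltn_exp2l.
have kr_le1 : (k ^ r <= 1)%N.
  rewrite leqNgt; apply/negP => kr_gt1.
  have kr1_gt0 : (0 < (k ^ r).-1)%N by rewrite -subn1 subn_gt0.
  by have := dvdn_leq kr1_gt0 dvd_kr; rewrite leqNgt lt_kr.
have : (k ^ r < k ^ 1)%N by rewrite expn1 (leq_ltn_trans kr_le1).
by rewrite ltn_exp2l // ltnS leqn0 => /eqP.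
Qed.

Section ZkArithmetic.

Variable k : nat.
Hypothesis k_gt1 : (1 < k)%N.
Local Notation K := (k%:R : rat).

Lemma K_neq0 : K != 0.
Proof. by rewrite pnatr_eq0 -lt0n ltnW. Qed.

Lemma K_neq1 : K != 1.
Proof. by rewrite gt_eqF ?ltr1n. Qed.

Lemma expK_eq1 (j : int) : (K ^ j == 1) = (j == 0).
Proof.
have K_ge0 : 0 <= K by rewrite ler0n.
case: j => n; first by rewrite pexprn_eq1 // (negPf K_neq1) orbF.
by rewrite NegzE -invr_expz invr_eq1 pexprn_eq1 // (negPf K_neq1).
Qed.

Lemma inZk_int (z : int) : inZk k z%:~R.
Proof. by exists z, 0; rewrite expr0z mulr1. Qed.

Lemma inZk_expK (j : int) : inZk k (K ^ j).
Proof. by exists 1, j; rewrite mul1r. Qed.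

Lemma inZk_opp x : inZk k x -> inZk k (- x).
Proof. by case=> z [i ->]; exists (- z), i; rewrite mulrNz mulNr. Qed.

Lemma inZk_mul x x' : inZk k x -> inZk k x' -> inZk k (x * x').
Proof.
move=> [z [i ->]] [z' [i' ->]]; exists (z * z'), (i + i').
by rewrite expfzDr ?K_neq0 // intrM; ring.
Qed.

Lemma inZk_add x x' : inZk k x -> inZk k x' -> inZk k (x + x').
Proof.
move=> [z [i ->]] [z' [i' ->]].
wlog le_ii' : z z' i i' / i <= i'.
  by move=> H; case: (lerP i i') => [/H // | /ltW/H]; rewrite addrC.
have [d ->] : exists d : nat, i' = i + d.
  by exists `|i' - i|%N; lia.
exists (z + z' * k%:Z ^+ d), i.
by rewrite expfzDr ?K_neq0 // intrD intrM rmorphXn -exprnP; ring.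
Qed.

Definition dvdZk (a b : rat) := exists z, inZk k z /\ b = z * a.

Lemma dvdZk_refl a : dvdZk a a.
Proof. by exists 1; split; [exact: (inZk_int 1) | rewrite mul1r]. Qed.

Lemma dvdZk0 a : dvdZk a 0.
Proof. by exists 0; split; [exact: (inZk_int 0) | rewrite mul0r]. Qed.

Lemma dvdZk_mull x a b : inZk k x -> dvdZk a b -> dvdZk a (x * b).
Proof.
move=> x_in [z [z_in ->]]; exists (x * z).
by rewrite mulrA; split; first exact: inZk_mul.
Qed.

Lemma dvdZk_trans a b c : dvdZk a b -> dvdZk b c -> dvdZk a c.
Proof. by move=> dvd_ab [z [z_in ->]]; exact: dvdZk_mull. Qed.

Lemma dvdZk_add a b c : dvdZk a b -> dvdZk a c -> dvdZk a (b + c).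
Proof.
move=> [z [z_in ->]] [z' [z'_in ->]]; exists (z + z'); rewrite mulrDl.
by split; first exact: inZk_add.
Qed.

Lemma dvdZk_mull_all a b : dvdZk a b <-> forall x, inZk k x -> dvdZk a (x * b).
Proof.
split=> [dvd_ab x x_in | /(_ 1 (inZk_int 1))]; last by rewrite mul1r.
exact: dvdZk_mull.
Qed.

Lemma dvdn_of_dvdZk (d m : nat) : coprime d k -> dvdZk d%:R m%:R -> (d %| m)%N.
Proof.
move=> cop_dk [_ [[w [i ->]] m_eq]].
suff [j dvd_kjm] : exists j, (d %| k ^ j * m)%N.
  by rewrite -(Gauss_dvdr _ (coprimeXr j cop_dk)).
have [j [w' Kj_m]] : exists j (w' : int), (k ^ j * m)%:R = w'%:~R * d%:R :> rat.
  case: i m_eq => j m_eq.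
    by exists 0%N, (w * k%:Z ^+ j); rewrite mul1n m_eq intrM rmorphXn -exprnP.
  exists j.+1, w; rewrite natrM natrX m_eq NegzE -invr_expz -exprnP.
  by field; rewrite expf_neq0 ?K_neq0.
exists j; change (d%:Z %| (k ^ j * m)%N%:Z)%Z; apply/dvdzP; exists w'.
by apply: (@intr_inj rat); rewrite intrM.
Qed.

Lemma dvdZk_expK_opp (j : int) : dvdZk (K ^ j - 1) (K ^ (- j) - 1).
Proof.
exists (- K ^ (- j)); split; first exact/inZk_opp/inZk_expK.
by rewrite mulrBr mulNr -expfzDr ?K_neq0 // addNr expr0z; ring.
Qed.

Lemma dvdZk_expK_mul (n q : int) : dvdZk (K ^ n - 1) (K ^ (q * n) - 1).
Proof.
wlog q_ge0 : q / 0 <= q.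
  move=> H; case: (lerP 0 q) => [/H // | /ltW q_le0].
  apply: dvdZk_trans (H (- q) _) _; first by rewrite oppr_ge0.
  by rewrite -[q * n]opprK -mulNr; exact: dvdZk_expK_opp.
have [q' ->] : exists q' : nat, q = q' by exists `|q|%N; lia.
elim: q' {q q_ge0} => [|q IH]; first by rewrite mul0r expr0z subrr; exact: dvdZk0.
have -> : K ^ (q.+1%:Z * n) - 1 = K ^ n * (K ^ (q%:Z * n) - 1) + (K ^ n - 1).
  by rewrite -addn1 PoszD mulrDl mul1r addrC expfzDr ?K_neq0 //; ring.
exact: dvdZk_add (dvdZk_mull (inZk_expK n) IH) (dvdZk_refl _).
Qed.

Lemma dvdZk_expK_mod (n m : int) :
  dvdZk (K ^ n - 1) (K ^ m - 1) -> dvdZk (K ^ n - 1) (K ^ (m %% n)%Z - 1).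
Proof.
move=> dvd_m; set q := (m %/ n)%Z.
have -> : K ^ (m %% n)%Z - 1 =
    K ^ (- (q * n)) * ((K ^ m - 1) + (-1) * (K ^ (q * n) - 1)).
  have Km : K ^ m = K ^ (q * n) * K ^ (m %% n)%Z.
    by rewrite {1}(divz_eq m n) expfzDr ?K_neq0.
  by rewrite Km -invr_expz; field; rewrite expfz_neq0 ?K_neq0.
apply: dvdZk_mull; first exact: inZk_expK.
apply: dvdZk_add dvd_m (dvdZk_mull (inZk_int (-1)) (dvdZk_expK_mul n q)).
Qed.

(* Reduce to n > 0 and replace m by r = m mod n; then k^n - 1, being coprime
   to k, divides k^r - 1 < k^n - 1 in Z, so r = 0. *)
Lemma dvdZk_expK_sub1 (n m : int) : dvdZk (K ^ n - 1) (K ^ m - 1) <-> (n %| m)%Z.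
Proof.
split; last by case/dvdzP => q ->; exact: dvdZk_expK_mul.
wlog n_gt0 : n / 0 < n.
  move=> H; case: (ltrgtP 0 n) => [/H // | n_lt0 | <-] dvd_m.
    rewrite dvdzE -abszN -dvdzE; apply: H; first by rewrite oppr_gt0.
    by apply: dvdZk_trans dvd_m; rewrite -{2}[n]opprK; exact: dvdZk_expK_opp.
  case: dvd_m => z [_]; rewrite expr0z subrr mulr0 => /eqP.
  by rewrite subr_eq0 expK_eq1 dvd0z.
move=> /dvdZk_expK_mod dvd_r; apply/dvdz_mod0P.
have [N n_eq] : exists N : nat, n = N by exists `|n|%N; lia.
have [r r_eq] : exists r : nat, (m %% n)%Z = r.
  by exists `|(m %% n)%Z|%N; rewrite gez0_abs // modz_ge0 // gt_eqF.
have lt_rN : (r < N)%N by have := ltz_pmod m n_gt0; rewrite r_eq n_eq.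
have predE p : (0 < p)%N -> p.-1%:R = p%:R - 1 :> rat.
  by move=> p_gt0; rewrite -subn1 natrB.
move: dvd_r; rewrite r_eq n_eq -!exprnP -!natrX -!predE ?expn_gt0 ?(ltnW k_gt1) //.
have N_gt0 : (0 < N)%N by apply: leq_ltn_trans lt_rN.
move/(dvdn_of_dvdZk (coprime_pred_expn (ltnW k_gt1) N_gt0)).
by move/(dvdn_pred_expn k_gt1 lt_rN) ->.
Qed.

End ZkArithmetic.

Definition bs_commute (k : nat) (g h : rat * int) : Prop := bs_mul k g h = bs_mul k h g.

Section BaumslagSolitar.

Variable k : nat.
Hypothesis k_gt1 : (1 < k)%N.
Local Notation K := (k%:R : rat).
Local Notation K_neq0 := (K_neq0 k_gt1).
Local Notation K_neq1 := (K_neq1 k_gt1).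

Lemma bs_mulA g h l : bs_mul k (bs_mul k g h) l = bs_mul k g (bs_mul k h l).
Proof. by rewrite /bs_mul /= opprD expfzDr ?K_neq0 //; congr pair; ring. Qed.

Lemma bs_mulVg g : bs_mul k (bs_inv k g) g = bs_one.
Proof. by rewrite /bs_mul /bs_inv /= opprK !addNr. Qed.

Lemma bs_mulg1 g : bs_mul k g bs_one = g.
Proof. by case: g => x p; rewrite /bs_mul /= mul0r !addr0. Qed.

Lemma bs_commute_level0 x x' : bs_commute k (x, 0) (x', 0).
Proof. by rewrite /bs_commute /bs_mul /= oppr0 expr0z !mulr1 addrC. Qed.

Lemma bs_commute_level x x' (p : int) : p != 0 -> bs_commute k (x, p) (x', p) -> x = x'.
Proof.
move=> p_neq0 [comm_xx'].
have Kp_neq1 : 1 - K ^ (- p) != 0 by rewrite subr_eq0 eq_sym expK_eq1 // oppr_eq0.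
apply/eqP; rewrite -subr_eq0; apply/eqP/(mulIf Kp_neq1); rewrite mul0r.
have -> : (x - x') * (1 - K ^ (- p)) = x + x' * K ^ (- p) - (x' + x * K ^ (- p)).
  by ring.
by rewrite comm_xx' subrr.
Qed.

Lemma bs_conj_level g t : (bs_mul k (bs_mul k t g) (bs_inv k t)).2 = g.2.
Proof. by rewrite /= addrC addKr. Qed.

Lemma bs_conjV_apow g x :
  bs_mul k (bs_mul k (bs_mul k (bs_inv k g) (bs_apow x)) g) (bs_inv k (bs_apow x))
  = bs_apow (x * (K ^ g.2 - 1)).
Proof.
case: g => Y p; rewrite /bs_mul /bs_inv /bs_apow /= !addr0 addNr.
by congr pair; rewrite oppr0 !expr0z !mulr1 opprK; ring.
Qed.

Section Generator.

Variable y : rat.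

(* For j > 0, geom j = 1 + k^-1 + ... + k^(1-j), and b1^j = (y * geom j, j). *)
Definition geom (j : int) : rat := (1 - K ^ (- j)) / (1 - K^-1).

Definition b1pow (j : int) : rat * int := (y * geom j, j).

Lemma geom_den_neq0 : 1 - K^-1 != 0.
Proof. by rewrite subr_eq0 eq_sym -exprN1 expK_eq1. Qed.

Lemma b1powD a b : bs_mul k (b1pow a) (b1pow b) = b1pow (a + b).
Proof.
rewrite /bs_mul /b1pow /geom /=; congr pair.
by rewrite opprD expfzDr ?K_neq0 //; field; rewrite K_neq0 subr_eq0 K_neq1.
Qed.

Lemma b1powN a : bs_inv k (b1pow a) = b1pow (- a).
Proof.
rewrite /bs_inv /b1pow /geom /=; congr pair; rewrite opprK -invr_expz.
by field; rewrite K_neq0 subr_eq0 K_neq1 expfz_neq0 ?K_neq0.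
Qed.

Lemma b1pow0 : b1pow 0 = bs_one.
Proof. by rewrite /b1pow /geom oppr0 expr0z subrr mul0r mulr0. Qed.

Lemma geom1 : geom 1 = 1.
Proof. by rewrite /geom exprN1 divff ?geom_den_neq0. Qed.

Lemma b1pow1 : bs_mul k (bs_apow y) bs_b = b1pow 1.
Proof. by rewrite /bs_mul /bs_apow /b1pow /= geom1 mul0r addr0 mulr1. Qed.

Lemma b1pow_inj : injective b1pow.
Proof. by move=> a b /(congr1 snd). Qed.

Lemma iter_b1pow a (n : nat) : iter n (bs_mul k (b1pow a)) bs_one = b1pow (a * n).
Proof.
elim: n => [|n IH]; first by rewrite mulr0 b1pow0.
by rewrite iterS IH b1powD -add1n PoszD mulrDr mulr1.
Qed.

Lemma bs_pow_b1pow1 j : bs_pow k (b1pow 1) j = b1pow j.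
Proof.
case: j => n; rewrite /bs_pow; first by rewrite iter_b1pow mul1r.
by rewrite b1powN iter_b1pow NegzE mulN1r.
Qed.

Lemma inZk_geom j : inZk k (geom j).
Proof.
have [z [z_in geom_eq]] : dvdZk k (K ^ (-1) - 1) (K ^ (- j) - 1).
  by apply/dvdZk_expK_sub1 => //; rewrite dvdzE abszN /= dvd1n.
suff -> : geom j = z by [].
apply: (mulIf geom_den_neq0); rewrite /geom -mulrA mulVf ?geom_den_neq0 // mulr1.
by rewrite -opprB geom_eq -exprN1 -mulrN opprB.
Qed.

Lemma bs_commute_b1pow1 g : bs_commute k g (b1pow 1) <-> g = b1pow g.2.
Proof.
split=> [|->]; last by rewrite /bs_commute !b1powD addrC.
case: g => x p [comm_x _]; rewrite /b1pow /=; congr pair.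
move: comm_x; rewrite geom1 mulr1 exprN1 => comm_x.
apply: (mulIf geom_den_neq0); rewrite /geom -mulrA divfK ?geom_den_neq0 //.
lra.
Qed.

(* An element outside the kernel commutes with its t-conjugate only if it
   equals it, i.e. only if it commutes with t. *)
Lemma bs_ker_iff g :
  bs_commute k g (bs_mul k (bs_mul k (b1pow 1) g) (bs_inv k (b1pow 1))) /\
  (bs_commute k g (b1pow 1) -> g = bs_one) <-> g.2 = 0.
Proof.
set c := bs_mul k (bs_mul k _ g) _.
have c_eq : c = (c.1, g.2).
  by apply: injective_projections => //; exact: bs_conj_level.
split=> [[comm_gc comm_gt] | g0]; last first.
  have g_eq : g = (g.1, 0) by rewrite -g0 -surjective_pairing.
  split; first by rewrite c_eq g0 g_eq; exact: bs_commute_level0.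
  by move/bs_commute_b1pow1 => ->; rewrite g0 b1pow0.
case: (eqVneq g.2 0) => // g_neq0.
have c_g : c = g.
  move: comm_gc; rewrite [g in bs_commute _ g _]surjective_pairing c_eq.
  by move/(bs_commute_level g_neq0) <-; rewrite -surjective_pairing.
have /comm_gt g1 : bs_commute k g (b1pow 1).
  by rewrite /bs_commute -{1}c_g /c bs_mulA bs_mulVg bs_mulg1.
by rewrite g1 eqxx in g_neq0.
Qed.

Hypothesis y_in : inZk k y.

Lemma b1pow_mem j : bs_mem k (b1pow j).
Proof. exact: inZk_mul y_in (inZk_geom j). Qed.

End Generator.

End BaumslagSolitar.

Lemma eq_multiplesz (c d : int) :
  (forall i, (d %| i)%Z <-> (c %| i)%Z) <-> c = d \/ c = - d.
Proof.
split=> [same | [] -> i]; [|by []|by rewrite !dvdzE abszN].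
have dvd_cd : (c %| d)%Z by apply/same; exact: dvdzz.
have dvd_dc : (d %| c)%Z by apply/same; exact: dvdzz.
have : `|c|%N = `|d|%N by apply/eqP; rewrite eqn_dvd -!dvdzE dvd_cd dvd_dc.
lia.
Qed.

Lemma coprimez_addr1 (x : int) : coprimez x (x + 1).
Proof. by apply/coprimezP; exists (-1, 1) => /=; ring. Qed.

Lemma common_multiples_consecutive (x c : int) :
  (forall i, (x %| i)%Z /\ (x + 1 %| i)%Z <-> (c %| i)%Z) <->
  c = x * (x + 1) \/ c = - (x * (x + 1)).
Proof.
rewrite -eq_multiplesz; apply: all_iff_morphism => i.
by rewrite Gauss_dvdz ?coprimez_addr1 // -(rwP andP).
Qed.

Lemma pronic_iff (x c : int) :
  (exists j, (forall i, (x %| i)%Z /\ (x + 1 %| i)%Z <-> (c %| i)%Z) /\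
             (forall i, (x + 1 %| i)%Z /\ (x + 1 + 1 %| i)%Z <-> (j %| i)%Z) /\
             j = c + (x + 1) + (x + 1))
  <-> c = x * (x + 1).
Proof.
split=> [[j [c_lcm [j_lcm j_def]]] | c_eq].
  move/common_multiples_consecutive: c_lcm; move/common_multiples_consecutive: j_lcm.
  by rewrite j_def => j_eq [] c_eq; nia.
exists ((x + 1) * (x + 1 + 1)); rewrite !common_multiples_consecutive c_eq.
by split; [left | split; [left | ring]].
Qed.

Fixpoint tvars_lt (n : nat) (t : gterm) : bool :=
  match t with
  | tvar j => (j < n)%N
  | tone => true
  | tmul s u => tvars_lt n s && tvars_lt n u
  | tinv s => tvars_lt n s
  end.

Lemma tvars_ltW m n t : (m <= n)%N -> tvars_lt m t -> tvars_lt n t.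
Proof.
move=> le_mn; elim: t => [j | | s IHs u IHu | s IHs] //=.
- by move/leq_trans; apply.
- by case/andP => /IHs -> /IHu.
Qed.

Lemma upd_eq e i g : upd e i g i = g.
Proof. by rewrite /upd eqxx. Qed.

Lemma upd_neq e i j g : j != i -> upd e i g j = e j.
Proof. by rewrite /upd => /negPf ->. Qed.

Lemma teval_upd n t : tvars_lt n t ->
  forall k e i g, (n <= i)%N -> teval k (upd e i g) t = teval k e t.
Proof.
move=> + k e i g le_ni; elim: t => [j | | s IHs u IHu | s IHs] //=.
- by move=> lt_jn; rewrite upd_neq // neq_ltn (leq_trans lt_jn le_ni).
- by case/andP => /IHs -> /IHu ->.
- by move/IHs ->.
Qed.

(* Variable 3 holds the parameter t = b1; the formulas below bind the fixed
   variables 4 to 9, and [tvars_lt] guarantees that argument terms avoid them. *)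
Definition tT := tvar 3.
Definition fcomm (s u : gterm) := feq (tmul s u) (tmul u s).
Definition fcent (u : gterm) := fcomm u tT.
Definition fker (u : gterm) :=
  fand (fcomm u (tmul (tmul tT u) (tinv tT))) (fimp (fcent u) (feq u tone)).
Definition fall_cent (i : nat) (f : gform) := fall i (fimp (fcent (tvar i)) f).
Definition fex_cent (i : nat) (f : gform) := fex i (fand (fcent (tvar i)) f).
Definition fall_ker (i : nat) (f : gform) := fall i (fimp (fker (tvar i)) f).
Definition fex_ker (i : nat) (f : gform) := fex i (fand (fker (tvar i)) f).
Definition fiff (f g : gform) := fand (fimp f g) (fimp g f).
Definition tconjV (g v : gterm) := tmul (tmul (tmul (tinv g) v) g) (tinv v).

(* For g = t^n and h = t^m: (k^m - 1)A is contained in (k^n - 1)A. *)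
Definition fdvd (g h : gterm) :=
  fall_ker 8 (fex_ker 9 (feq (tconjV h (tvar 8)) (tconjV g (tvar 9)))).

Definition flcm (a b c : gterm) :=
  fall_cent 7 (fiff (fand (fdvd a (tvar 7)) (fdvd b (tvar 7))) (fdvd c (tvar 7))).

(* Exponents: c = +-lcm(x, x + 1), and the sign is pinned down by
   c + 2(x + 1) = +-lcm(x + 1, x + 2). *)
Definition fpronic (X C : gterm) :=
  let X1 := tmul X tT in
  fex_cent 6 (fand (flcm X X1 C)
    (fand (flcm X1 (tmul X1 tT) (tvar 6)) (feq (tvar 6) (tmul (tmul C X1) X1)))).

Definition fmul :=
  let x := tvar 0 in let y := tvar 1 in let z := tvar 2 in
  fex_cent 4 (fex_cent 5 (fand (fpronic (tmul x y) (tvar 4))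
    (fand (fpronic (tmul x (tinv y)) (tvar 5))
      (feq (tmul (tmul (tmul (tmul (tmul (tmul z z) z) z) y) y) (tvar 5)) (tvar 4))))).

Section Definability.

Variable k : nat.
Hypothesis k_gt1 : (1 < k)%N.
Local Notation K := (k%:R : rat).
Variable y : rat.
Hypothesis y_in : inZk k y.
Local Notation b1pow := (b1pow k y).

Lemma sat_fcent e i g : i != 3%N -> e 3%N = b1pow 1 ->
  sat k (upd e i g) (fcent (tvar i)) <-> g = b1pow g.2.
Proof.
by move=> i3 e3; rewrite -(bs_commute_b1pow1 k_gt1 y) /= upd_eq upd_neq 1?eq_sym // e3.
Qed.

Lemma sat_fker e i g : i != 3%N -> e 3%N = b1pow 1 ->
  sat k (upd e i g) (fker (tvar i)) <-> g.2 = 0.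
Proof.
by move=> i3 e3; rewrite -(bs_ker_iff k_gt1 y) /= upd_eq upd_neq 1?eq_sym // e3.
Qed.

Lemma sat_fall_cent e i f : i != 3%N -> e 3%N = b1pow 1 ->
  sat k e (fall_cent i f) <-> forall j, sat k (upd e i (b1pow j)) f.
Proof.
move=> i3 e3; split=> [sat_f j | sat_f g _ /(sat_fcent _ i3 e3) ->]; last exact: sat_f.
by apply: sat_f (b1pow_mem k_gt1 y_in j) _; apply/(sat_fcent _ i3 e3).
Qed.

Lemma sat_fex_cent e i f : i != 3%N -> e 3%N = b1pow 1 ->
  sat k e (fex_cent i f) <-> exists j, sat k (upd e i (b1pow j)) f.
Proof.
move=> i3 e3; split=> [[g [_ [/(sat_fcent _ i3 e3) g_eq sat_f]]] | [j sat_f]].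
  by exists g.2; rewrite -g_eq.
exists (b1pow j); split; first exact: b1pow_mem.
by split=> //; apply/(sat_fcent _ i3 e3).
Qed.

Lemma sat_fall_ker e i f : i != 3%N -> e 3%N = b1pow 1 ->
  sat k e (fall_ker i f) <-> forall x, inZk k x -> sat k (upd e i (bs_apow x)) f.
Proof.
move=> i3 e3; split=> [sat_f x x_in | sat_f g g_in /(sat_fker _ i3 e3) g0].
  by apply: (sat_f (bs_apow x) x_in); apply/(sat_fker _ i3 e3).
by rewrite [g]surjective_pairing g0; exact: sat_f.
Qed.

Lemma sat_fex_ker e i f : i != 3%N -> e 3%N = b1pow 1 ->
  sat k e (fex_ker i f) <-> exists x, inZk k x /\ sat k (upd e i (bs_apow x)) f.
Proof.
move=> i3 e3; split=> [[g [g_in [/(sat_fker _ i3 e3) g0 sat_f]]] | [x [x_in sat_f]]].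
  by exists g.1; split=> //; rewrite /bs_apow -g0 -surjective_pairing.
exists (bs_apow x); split=> //; split=> //; exact/(sat_fker _ i3 e3).
Qed.

Lemma sat_fdvd e g h n m : e 3%N = b1pow 1 -> tvars_lt 8 g -> tvars_lt 8 h ->
  teval k e g = b1pow n -> teval k e h = b1pow m ->
  sat k e (fdvd g h) <-> (n %| m)%Z.
Proof.
move=> e3 g_lt h_lt g_n h_m.
rewrite -(dvdZk_expK_sub1 k_gt1) (dvdZk_mull_all k_gt1) /fdvd sat_fall_ker //.
have sat_conj x z :
    sat k (upd (upd e 8 (bs_apow x)) 9 (bs_apow z))
      (feq (tconjV h (tvar 8)) (tconjV g (tvar 9)))
    <-> x * (K ^ m - 1) = z * (K ^ n - 1).
  rewrite /= !(teval_upd g_lt) ?(teval_upd h_lt) // g_n h_m.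
  rewrite upd_eq upd_neq // upd_eq !bs_conjV_apow /=.
  by split=> [[]|->].
split=> sat_f x /sat_f; rewrite sat_fex_ker ?upd_neq //.
  by case=> z [z_in /sat_conj xz]; exists z.
by case=> z [z_in xz]; exists z; split; last exact/sat_conj.
Qed.

Lemma sat_flcm e a b c na nb nc : e 3%N = b1pow 1 ->
  tvars_lt 7 a -> tvars_lt 7 b -> tvars_lt 7 c ->
  teval k e a = b1pow na -> teval k e b = b1pow nb -> teval k e c = b1pow nc ->
  sat k e (flcm a b c) <-> forall j, (na %| j)%Z /\ (nb %| j)%Z <-> (nc %| j)%Z.
Proof.
move=> e3 a_lt b_lt c_lt a_na b_nb c_nc.
rewrite /flcm sat_fall_cent //; apply: all_iff_morphism => j.
have sat_dvd t nt : tvars_lt 7 t -> teval k e t = b1pow nt ->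
    sat k (upd e 7 (b1pow j)) (fdvd t (tvar 7)) <-> (nt %| j)%Z.
  move=> t_lt t_nt; apply: sat_fdvd; rewrite ?upd_eq ?(teval_upd t_lt) //.
  exact: tvars_ltW t_lt.
cbn [sat fiff].
by rewrite (sat_dvd _ _ a_lt a_na) (sat_dvd _ _ b_lt b_nb) (sat_dvd _ _ c_lt c_nc).
Qed.

Lemma sat_fpronic e X C x c : e 3%N = b1pow 1 -> tvars_lt 6 X -> tvars_lt 6 C ->
  teval k e X = b1pow x -> teval k e C = b1pow c ->
  sat k e (fpronic X C) <-> c = x * (x + 1).
Proof.
move=> e3 X_lt C_lt X_x C_c.
rewrite -pronic_iff /fpronic sat_fex_cent //; apply: ex_iff_morphism => j.
set e' := upd e 6 (b1pow j).
have e'3 : e' 3%N = b1pow 1 by rewrite /e' upd_neq.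
have X_x' : teval k e' X = b1pow x by rewrite /e' (teval_upd X_lt).
have C_c' : teval k e' C = b1pow c by rewrite /e' (teval_upd C_lt).
have X1_x : teval k e' (tmul X tT) = b1pow (x + 1) by rewrite /= X_x' e'3 b1powD.
have X2_x : teval k e' (tmul (tmul X tT) tT) = b1pow (x + 1 + 1).
  by rewrite /= X_x' e'3 !b1powD.
have X_lt7 := tvars_ltW (leqnSn 6) X_lt.
have C_lt7 := tvars_ltW (leqnSn 6) C_lt.
have X1_lt : tvars_lt 7 (tmul X tT) by rewrite /= X_lt7.
have X2_lt : tvars_lt 7 (tmul (tmul X tT) tT) by rewrite /= X_lt7.
have v6 : e' 6%N = b1pow j := upd_eq _ _ _.
cbn [sat]; clearbody e'.
rewrite (sat_flcm e'3 X_lt7 X1_lt C_lt7 X_x' X1_x C_c').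
rewrite (sat_flcm e'3 X1_lt X2_lt _ X1_x X2_x (v6 : teval k e' (tvar 6) = _)) //=.
rewrite v6 C_c' X_x' e'3 !(b1powD k_gt1).
split=> -[lcm1 [lcm2 j_eq]]; split=> //; split=> //.
  exact: b1pow_inj j_eq.
by rewrite j_eq.
Qed.

Lemma sat_fmul e n l m : e 0%N = b1pow n -> e 1%N = b1pow l -> e 2%N = b1pow m ->
  e 3%N = b1pow 1 -> sat k e fmul <-> n * l = m.
Proof.
move=> e0 e1 e2 e3.
have -> : n * l = m <-> exists a b, [/\ a = (n + l) * (n + l + 1),
    b = (n - l) * (n - l + 1) & m + m + m + m + l + l + b = a].
  split=> [<- | [_ [_ [-> -> eq_ab]]]]; last by nia.
  by exists ((n + l) * (n + l + 1)), ((n - l) * (n - l + 1)); split=> //; ring.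
rewrite /fmul sat_fex_cent //; apply: ex_iff_morphism => a.
rewrite sat_fex_cent ?upd_neq //; apply: ex_iff_morphism => b.
set e' := upd (upd e 4 (b1pow a)) 5 (b1pow b).
have e'_e j : (j < 4)%N -> e' j = e j.
  by move=> lt_j4; rewrite /e' !upd_neq //; lia.
have v4 : e' 4%N = b1pow a by rewrite /e' upd_neq ?upd_eq.
have v5 : e' 5%N = b1pow b by rewrite /e' upd_eq.
have e'3 : e' 3%N = b1pow 1 by rewrite e'_e.
have xy : teval k e' (tmul (tvar 0) (tvar 1)) = b1pow (n + l).
  by rewrite /= !e'_e // e0 e1 b1powD.
have xyV : teval k e' (tmul (tvar 0) (tinv (tvar 1))) = b1pow (n - l).
  by rewrite /= !e'_e // e0 e1 (b1powN k_gt1) b1powD.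
cbn [sat]; clearbody e'.
rewrite (sat_fpronic e'3 _ _ xy (v4 : teval k e' (tvar 4) = _)) //.
rewrite (sat_fpronic e'3 _ _ xyV (v5 : teval k e' (tvar 5) = _)) //=.
rewrite v4 v5 !e'_e // e1 e2 !(b1powD k_gt1).
by split=> [[-> [-> /b1pow_inj]] | [-> -> <-]].
Qed.

End Definability.

Theorem lemma4p6 (k : nat) (hk : (2 <= k)%N) :
  exists gamma : gform,
    forall (y : rat), inZk k y ->
    let b1 := bs_mul k (bs_apow y) bs_b in
    forall (n l m : int) (e : env),
      (forall j, bs_mem k (e j)) ->
      e 0%N = bs_pow k b1 n -> e 1%N = bs_pow k b1 l ->
      e 2%N = bs_pow k b1 m -> e 3%N = b1 ->
      (sat k e gamma <-> n * l = m).
Proof.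
exists fmul => y y_in b1 n l m e _.
rewrite /b1 (b1pow1 hk) !(bs_pow_b1pow1 hk).
exact: sat_fmul.
Qed.
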